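(* Let $K$ be a field of characteristic zero, $R=K[X_1,\ldots,X_n]$, $R_{n-1}=K[X_1,\ldots,X_{n-1}]$. Let $P$ be a prime ideal of $R$ and $I$ an ideal of $R$ with $\sqrt I=P$. If $\partial_n(I)\subseteq I$ (where $\partial_n=\partial/\partial X_n$), then $P=(P\cap R_{n-1})R$. *)

From mathcomp Require Import all_boot all_algebra.
From mathcomp Require Import mpoly.
Set Implicit Arguments. Unset Strict Implicit. Unset Printing Implicit Defensive.
Import GRing.Theory.
Local Open Scope ring_scope.

Definition is_ideal (R : comRingType) (I : pred R) : Prop :=
  [/\ 0 \in I,
      (forall a b, a \in I -> b \in I -> a + b \in I) &
      (forall r a, a \in I -> r * a \in I)].

Definition is_prime_ideal (R : comRingType) (P : pred R) : Prop :=
  [/\ is_ideal P, 1 \notin P &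
      forall a b, a * b \in P -> a \in P \/ b \in P].

Definition radical_eq (R : comRingType) (I P : pred R) : Prop :=
  forall f, (exists k : nat, f ^+ k \in I) <-> f \in P.

(* p lies in the subring K[X_j : j <> i], i.e. no monomial of p involves X_i. *)
Definition free_of_var (K : fieldType) (n : nat) (i : 'I_n)
  (p : {mpoly K[n]}) : Prop :=
  forall m, m \in msupp p -> m i = 0%N.

Definition in_generated_ideal (R : comRingType) (J : R -> Prop) (f : R) : Prop :=
  exists s : seq (R * R), (forall x, x \in s -> J x.2) /\
    f = \sum_(x <- s) x.1 * x.2.

From mathcomp Require Import all_boot all_algebra.
From mathcomp Require Import mpoly.
From mathcomp Require Import ring.
Set Implicit Arguments. Unset Strict Implicit. Unset Printing Implicit Defensive.
Import GRing.Theory.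
Local Open Scope ring_scope.

(* In characteristic zero such a radical P is again
   [d/dX_i]-stable, because [f^k \in I] forces [f^(k-j) (f')^(2j) \in I] for
   all [j <= k].  A [d/dX_i]-stable ideal is generated by its elements free of
   [X_i]: if [f] has [X_i]-degree [d], then its [d]-th derivative [f^(d)] is free of [X_i] and lies in
   the ideal, and [f - X_i^d f^(d) / d!] has smaller [X_i]-degree. *)

Section Ideals.
Variable R : comNzRingType.
Implicit Types (I : pred R) (a b u v : R).

Lemma ideal_opp I a : is_ideal I -> a \in I -> - a \in I.
Proof. by case=> _ _ hM ha; rewrite -mulN1r; apply: hM. Qed.

Lemma ideal_sub I a b : is_ideal I -> a \in I -> b \in I -> a - b \in I.
Proof. by move=> hI ha hb; case: (hI) => _ hD _; apply: hD (ideal_opp hI hb). Qed.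

Lemma ideal_unit_cancel I u v a : is_ideal I -> v * u = 1 -> u * a \in I -> a \in I.
Proof. by case=> _ _ hM vu hua; rewrite -[a]mul1r -vu -mulrA; apply: hM. Qed.

Lemma generated_ideal_sub I (J : R -> Prop) f :
  is_ideal I -> (forall q, J q -> q \in I) -> in_generated_ideal J f -> f \in I.
Proof.
move=> [h0 hD hM] hJ [s [hs ->]].
elim: s hs => [|x s ihs] hs; first by rewrite big_nil.
rewrite big_cons; apply: hD; first by apply/hM/hJ/hs; rewrite inE eqxx.
by apply: ihs => y hy; apply: hs; rewrite inE hy orbT.
Qed.

End Ideals.

Definition mdeg_var_lt (K : nzRingType) n (i : 'I_n) (d : nat) (f : {mpoly K[n]}) :=
  forall m : 'X_{1..n}, (d <= m i)%N -> f@_m = 0.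

Section MDeriv.
Variables (K : comNzRingType) (n : nat) (i : 'I_n).
Implicit Types (f x : {mpoly K[n]}) (I : pred {mpoly K[n]}).

Lemma mderiv_exprS x k : (x ^+ k.+1)^`M(i) = k.+1%:R * x ^+ k * x^`M(i).
Proof.
elim: k => [|k ih]; first by rewrite expr1 expr0 mulr1 mul1r.
by rewrite exprS mderivM ih !exprS; ring.
Qed.

Lemma mderivM_expr_mderiv f a b (D := f^`M(i)) :
  D * (f ^+ a.+1 * D ^+ b)^`M(i) =
  a.+1%:R * (f ^+ a * D ^+ b.+2) + b%:R * D^`M(i) * (f ^+ a.+1 * D ^+ b).
Proof.
rewrite mderivM mderiv_exprS -/D.
case: b => [|b]; first by rewrite expr0 -mpolyC1 mderivC mpolyC1 !exprS; ring.
by rewrite mderiv_exprS !exprS; ring.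
Qed.

Lemma mderivn_closed I :
  (forall f, f \in I -> f^`M(i) \in I) -> forall k f, f \in I -> f^`M(i, k) \in I.
Proof. by move=> hD k f hf; rewrite mderivn_iter; elim: k => //= k ih; apply: hD. Qed.

Lemma mcoeff_mderivn f k m : (f^`M(i, k))@_m = f@_(m + U_(i) *+ k) *+ (m i + k)^_k.
Proof.
rewrite mcoeff_mderivm addmC (bigD1 i) //= big1 ?muln1.
  by rewrite mnmDE mulmnE mnm1E eqxx mul1n.
by move=> j ne_ji; rewrite mulmnE mnm1E eq_sym (negbTE ne_ji) ffactn0.
Qed.

Lemma mdeg_var_lt_msize f : mdeg_var_lt i (msize f) f.
Proof.
move=> m hm; apply: memN_msupp_eq0; apply: msize_mdeg_ge.
by rewrite (leq_trans hm) // mdegE (bigD1 i) //= leq_addr.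
Qed.

Lemma mdeg_var_lt0 f : mdeg_var_lt i 0 f -> f = 0.
Proof. by move=> hf; apply/mpolyP => m; rewrite mcoeff0 hf. Qed.

End MDeriv.

Section CharZero.
Variables (K : fieldType) (n : nat) (i : 'I_n).
Hypothesis charK0 : [pchar K] =i pred0.
Implicit Types (f : {mpoly K[n]}) (I P : pred {mpoly K[n]}).

Lemma mdeg_var_lt_mderivn f d :
  mdeg_var_lt i d.+1 f -> free_of_var i (f^`M(i, d)).
Proof.
move=> hf m; rewrite mcoeff_msupp mcoeff_mderivn; apply: contraNeq => hm.
rewrite hf ?mul0rn // mnmDE mulmnE mnm1E eqxx mul1n.
by rewrite -add1n leq_add2r lt0n.
Qed.

Lemma mpolyC_natSV_mul k : ((k.+1)%:R^-1)%:MP * k.+1%:R = 1 :> {mpoly K[n]}.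
Proof.
by rewrite -mpolyC_nat -mpolyCM mulVf ?mpolyC1 //; move/pcharf0P: charK0 => ->.
Qed.

Lemma radical_mderiv_closed I P :
  is_ideal I -> radical_eq I P -> (forall f, f \in I -> f^`M(i) \in I) ->
  forall f, f \in P -> f^`M(i) \in P.
Proof.
move=> hI hrad hder f /hrad [k hk]; pose D := f^`M(i).
have hM r g : g \in I -> r * g \in I by case: hI => _ _; apply.
suff H j a : (a + j = k)%N -> f ^+ a * D ^+ (2 * j) \in I.
  by apply/hrad; exists (2 * k)%N; rewrite -[_ ^+ _]mul1r -(expr0 f) H ?add0n.
elim: j a => [|j ih] a; first by rewrite addn0 muln0 expr0 mulr1 => ->.
rewrite addnS -addSn => /ih hIa.
apply: (ideal_unit_cancel hI (mpolyC_natSV_mul a)).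
have -> : a.+1%:R * (f ^+ a * D ^+ (2 * j.+1)) =
    D * (f ^+ a.+1 * D ^+ (2 * j))^`M(i) -
    (2 * j)%:R * D^`M(i) * (f ^+ a.+1 * D ^+ (2 * j)).
  by rewrite mderivM_expr_mderiv addrK mulnS.
by apply: ideal_sub hI _ _; apply: hM => //; apply: hder.
Qed.

Lemma mdeg_var_lt_taylor f d (c := (d`!%:R^-1 : K)) :
  mdeg_var_lt i d.+1 f ->
  mdeg_var_lt i d (f - c%:MP * 'X_[U_(i) *+ d] * f^`M(i, d)).
Proof.
move=> hf m hm; set M := (U_(i) *+ d)%MM.
have hMm : (M <= m)%MM.
  by apply/mnm_lepP => j; rewrite mulmnE mnm1E; case: eqP => [<-|]; rewrite ?mul1n.
have em : m = (M + (m - M))%MM by rewrite addmC submK.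
rewrite mcoeffB mulrAC {2}em mcoeffMX mcoeffCM mcoeff_mderivn addmC -em.
have [m0i|m0i] := eqVneq ((m - M)%MM i) 0%N.
  rewrite m0i add0n ffactnn -mulr_natr mulrCA mulVf ?mulr1 ?subrr //.
  by move/pcharf0P: charK0 => ->; rewrite -lt0n fact_gt0.
rewrite hf ?mul0rn ?mulr0 ?subr0 // em mnmDE mulmnE mnm1E eqxx mul1n.
by rewrite -add1n addnC leq_add2l lt0n.
Qed.

Lemma mderiv_closed_generated P :
  is_ideal P -> (forall f, f \in P -> f^`M(i) \in P) ->
  forall d f, f \in P -> mdeg_var_lt i d f ->
  in_generated_ideal (fun q => q \in P /\ free_of_var i q) f.
Proof.
move=> hPi hD; elim=> [|d ih] f hfP hf.
  by exists [::]; rewrite big_nil (mdeg_var_lt0 hf).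
pose h := f^`M(i, d); pose q : {mpoly K[n]} := (d`!%:R^-1)%:MP * 'X_[U_(i) *+ d].
have hhP : h \in P by apply: mderivn_closed.
have hgP : f - q * h \in P by apply: ideal_sub => //; case: hPi => _ _; apply.
have [s [hs es]] := ih _ hgP (mdeg_var_lt_taylor hf).
exists ((q, h) :: s); split; last by rewrite big_cons /= -es addrC subrK.
move=> x; rewrite inE => /orP [/eqP -> //|]; last exact: hs.
by split=> //; apply: mdeg_var_lt_mderivn.
Qed.

End CharZero.

Theorem corollary7p3 (K : fieldType) (n : nat)
  (charK0 : [pchar K] =i pred0)
  (P I : pred {mpoly K[n.+1]})
  (hP : is_prime_ideal P) (hI : is_ideal I) (hrad : radical_eq I P)
  (hder : forall f, f \in I -> mderiv ord_max f \in I) :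
  forall f, f \in P <->
    in_generated_ideal
      (fun q : {mpoly K[n.+1]} => q \in P /\ free_of_var ord_max q) f.
Proof.
case: hP => hPi _ _.
have hD := radical_mderiv_closed charK0 hI hrad hder.
move=> f; split; last by apply: generated_ideal_sub => // q [].
move=> hf; exact: (mderiv_closed_generated charK0 hPi hD hf
                     (@mdeg_var_lt_msize _ _ ord_max f)).
Qed.
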